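(* Let $\Gamma$ be a torsion-free word hyperbolic group and $\langle w \rangle$ a maximal cyclic subgroup of $\Gamma$. Suppose that $\rho:\Gamma \to \mathsf{GL}(d, \mathbb{R})$ is a projective Anosov representation. Then there exists $h \in \mathsf{GL}(d, \mathbb{R})$ such that for every $g \in \Gamma \smallsetminus \langle w \rangle$, the $(1,1)$, $(1,d)$, $(d,1)$ and $(d,d)$ entries of the matrix $h\rho(g)h^{-1}$ are non-zero.
   Context: Fix a word length $|\cdot|$ on $\Gamma$. For a matrix $A$, $\sigma_1(A)\ge\sigma_2(A)\ge\dots$ denote its singular values. A representation $\rho:\Gamma\to\mathsf{GL}(d,\mathbb R)$ is projective Anosov if there are constants $C,a>0$ with $\sigma_1(\rho(\gamma))/\sigma_2(\rho(\gamma))\ge Ce^{a|\gamma|}$ for all $\gamma\in\Gamma$. A cyclic subgroup is maximal if it is not contained in a strictly larger cyclic subgroup. *)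

From HB Require Import structures.
From mathcomp Require Import all_boot all_order all_algebra.
From mathcomp Require Import all_classical all_reals all_analysis.
From Stdlib Require Import List.
Set Implicit Arguments. Unset Strict Implicit. Unset Printing Implicit Defensive.
Import Order.TTheory GRing.Theory Num.Theory.
Local Open Scope ring_scope.

Record group_axioms (G : Type) (mul : G -> G -> G) (one : G) (inv : G -> G)
  : Prop := GroupAxioms {
  gmulA : forall x y z, mul x (mul y z) = mul (mul x y) z;
  gmul1l : forall x, mul one x = x;
  gmul1r : forall x, mul x one = x;
  gmulVl : forall x, mul (inv x) x = one;
  gmulVr : forall x, mul x (inv x) = one }.

Definition gpow (G : Type) (mul : G -> G -> G) (one : G) (g : G) (n : nat) : G :=
  iter n (mul g) one.

Definition gzpow (G : Type) (mul : G -> G -> G) (one : G) (inv : G -> G)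
  (g : G) (k : int) : G :=
  match k with
  | Posz n => gpow mul one g n
  | Negz n => inv (gpow mul one g n.+1)
  end.

Definition torsion_free (G : Type) (mul : G -> G -> G) (one : G) : Prop :=
  forall g, g <> one -> forall n : nat, (0 < n)%N -> gpow mul one g n <> one.

Definition in_cyclic (G : Type) (mul : G -> G -> G) (one : G) (inv : G -> G)
  (w g : G) : Prop := exists k : int, g = gzpow mul one inv w k.

Definition maximal_cyclic (G : Type) (mul : G -> G -> G) (one : G)
  (inv : G -> G) (w : G) : Prop :=
  forall u, (forall g, in_cyclic mul one inv w g -> in_cyclic mul one inv u g) ->
            (forall g, in_cyclic mul one inv u g -> in_cyclic mul one inv w g).

Definition letter (G : Type) (inv : G -> G) (S : list G) (x : G) : Prop :=
  In x S \/ In (inv x) S.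

Definition represents (G : Type) (mul : G -> G -> G) (one : G) (inv : G -> G)
  (S : list G) (g : G) (n : nat) : Prop :=
  exists l : list G, length l = n /\ Forall (letter inv S) l /\ foldr mul one l = g.

Definition generates (G : Type) (mul : G -> G -> G) (one : G) (inv : G -> G)
  (S : list G) : Prop :=
  forall g, exists n, represents mul one inv S g n.

Definition is_wordlen (G : Type) (mul : G -> G -> G) (one : G) (inv : G -> G)
  (S : list G) (g : G) (n : nat) : Prop :=
  represents mul one inv S g n /\
  forall m, represents mul one inv S g m -> (n <= m)%N.

(** Word hyperbolicity: the word metric d(x,y) = |x^{-1} y| satisfies
    Gromov's four-point condition for some delta. *)
Definition word_hyperbolic (G : Type) (mul : G -> G -> G) (one : G)
  (inv : G -> G) (S : list G) : Prop :=
  exists delta : nat, forall x y z w (nxy nzw nxz nyw nxw nyz : nat),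
    is_wordlen mul one inv S (mul (inv x) y) nxy ->
    is_wordlen mul one inv S (mul (inv z) w) nzw ->
    is_wordlen mul one inv S (mul (inv x) z) nxz ->
    is_wordlen mul one inv S (mul (inv y) w) nyw ->
    is_wordlen mul one inv S (mul (inv x) w) nxw ->
    is_wordlen mul one inv S (mul (inv y) z) nyz ->
    (nxy + nzw <= maxn (nxz + nyw) (nxw + nyz) + delta.*2)%N.

(** * Singular values.  [singular_values_sq A s] : s is the list of the
    eigenvalues of A^T A, with multiplicity, in nonincreasing order; the
    singular values are sigma_i(A) = sqrt (s`_i) (indices from 0). *)
Definition singular_values_sq (R : realType) (d : nat) (A : 'M[R]_d)
  (s : list R) : Prop :=
  [/\ size s = d, sorted (fun x y => y <= x) s &
      char_poly (A^T *m A) = \prod_(x <- s) ('X - x%:P)].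

Definition representation (G : Type) (mul : G -> G -> G) (one : G)
  (R : realType) (d : nat) (rho : G -> 'M[R]_d) : Prop :=
  (forall g, rho g \in unitmx) /\ rho one = 1%:M /\
  forall g h, rho (mul g h) = rho g *m rho h.

Definition projective_anosov (G : Type) (mul : G -> G -> G) (one : G)
  (inv : G -> G) (S : list G) (R : realType) (d : nat) (rho : G -> 'M[R]_d)
  : Prop :=
  exists C a : R, 0 < C /\ 0 < a /\
    forall g n, is_wordlen mul one inv S g n ->
      exists s, singular_values_sq (rho g) s /\
        C * expR (a * n%:R) <= Num.sqrt (s`_0) / Num.sqrt (s`_1).

(* If [rho g] were a scalar matrix, its first two singular values would agree, so
   the Anosov inequality would bound the word length of every power of [g]; as balls
   of the word metric are finite and the group is torsion-free, this forces [g = 1].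
   Hence [rho g] is not scalar for [g] outside [<w>], and it remains to conjugate a
   countable family of non-scalar matrices simultaneously so that all four corners
   become non-zero.
   Conjugating by a transvection [1 + t E_ij] makes every entry a polynomial of
   degree at most 2 in [t]. A property holding for all but finitely many [t] for each
   member of a countable family thus holds for one common real [t], since the reals
   are uncountable. A chain of such steps moves an entry witnessing non-scalarity
   into the first row, then into the corner [(1, d)], and a last transvection
   [1 + t E_d1] makes all four corners non-zero. *)

From HB Require Import structures.
From mathcomp Require Import all_boot all_order all_algebra.
From mathcomp Require Import all_classical all_reals all_analysis.
From mathcomp Require Import ring lra.
Set Implicit Arguments. Unset Strict Implicit. Unset Printing Implicit Defensive.
Import Order.TTheory GRing.Theory Num.Theory.
Local Open Scope ring_scope.

Section Transvection.
Variables (R : comUnitRingType) (n : nat).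
Implicit Types (i j a b : 'I_n) (s t : R) (M : 'M[R]_n).

Definition transvection i j t : 'M[R]_n := 1%:M + t *: delta_mx i j.

Definition transvection_conj i j t M :=
  transvection i j t *m M *m transvection i j (- t).

Lemma transvection0 i j : transvection i j 0 = 1%:M.
Proof. by rewrite /transvection scale0r addr0. Qed.

Lemma transvectionD i j s t : i != j ->
  transvection i j s *m transvection i j t = transvection i j (s + t).
Proof.
move=> ij; rewrite /transvection mulmxDl !mulmxDr !mul1mx mulmx1.
rewrite -scalemxAl -scalemxAr mul_delta_mx_0 1?eq_sym // !scaler0 addr0.
by rewrite scalerDl addrA addrAC.
Qed.

Lemma transvection_unit i j t : i != j -> transvection i j t \in unitmx.
Proof.
move=> ij; apply: (proj1 (@mulmx1_unit _ _ _ (transvection i j (- t)) _)).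
by rewrite transvectionD // subrr transvection0.
Qed.

Lemma invmx_transvection i j t : i != j ->
  invmx (transvection i j t) = transvection i j (- t).
Proof.
move=> ij; rewrite -[RHS]mul1mx -(mulVmx (transvection_unit t ij)) -mulmxA.
by rewrite transvectionD // subrr transvection0 mulmx1.
Qed.

Lemma mul_delta_mx_entry i j M a b : (delta_mx i j *m M) a b = (a == i)%:R * M j b.
Proof.
rewrite mxE (bigD1 j) //= mxE eqxx andbT big1 ?addr0 // => k kj.
by rewrite mxE (negbTE kj) andbF mul0r.
Qed.

Lemma mul_mx_delta_entry i j M a b : (M *m delta_mx i j) a b = M a i * (b == j)%:R.
Proof.
rewrite mxE (bigD1 i) //= mxE eqxx /= big1 ?addr0 // => k ki.
by rewrite mxE (negbTE ki) mulr0.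
Qed.

Lemma transvection_conjE i j t M a b :
  transvection_conj i j t M a b =
    M a b + ((a == i)%:R * M j b - M a i * (b == j)%:R) * t
          + (- ((a == i)%:R * M j i * (b == j)%:R)) * t ^+ 2.
Proof.
rewrite /transvection_conj /transvection mulmxDl !mulmxDr !mul1mx !mulmx1 -!scalemxAl -!scalemxAr.
have entryD (A B : 'M[R]_n) x y : (A + B) x y = A x y + B x y by rewrite mxE.
have entryZ (c : R) (A : 'M[R]_n) x y : (c *: A) x y = c * A x y by rewrite mxE.
rewrite !(entryD, entryZ, mul_delta_mx_entry, mul_mx_delta_entry); ring.
Qed.

Lemma transvection_conj_id i j t M a b : a != i -> b != j ->
  transvection_conj i j t M a b = M a b.
Proof.
move=> ai bj; rewrite transvection_conjE (negbTE ai) (negbTE bj).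
by rewrite !(mul0r, mulr0) subrr oppr0 !mul0r !addr0.
Qed.

End Transvection.

Local Open Scope classical_set_scope.

Lemma real_uncountable (R : realType) : ~ countable [set: R].
Proof.
move=> /(sub_countable (subset_card_le (@subsetT _ `[0%R, 1%R]))).
move=> /countable_lebesgue_measure0; rewrite lebesgue_measure_itv /=.
by rewrite lte_fin ltr01 oppr0 adde0 => /eqP; rewrite eqe oner_eq0.
Qed.

Lemma bigcap_cofinite_neq0 (R : realType) (I : Type) (A : set I) (F : I -> set R) :
  countable A -> (forall i, A i -> cofinite_set (F i)) ->
  \bigcap_(i in A) F i !=set0.
Proof.
move=> cA cF; apply/set0P/eqP => capF0; apply: (@real_uncountable R).
have -> : [set: R] = \bigcup_(i in A) ~` F i by rewrite -setC_bigcap capF0 setC0.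
by apply: bigcup_countable => // i /cF /finite_set_countable.
Qed.

Lemma cofinite_nonroot (R : idomainType) (p : {poly R}) :
  p != 0 -> cofinite_set [set t | ~~ root p t].
Proof.
move=> p0; apply: contrapT => /(infinite_set_fset (size p)) [B BA szB].
have /(max_poly_roots p0) : all (root p) (finmap.enum_fset B).
  by apply/allP => x /BA /negP; rewrite negbK.
by rewrite finmap.fset_uniq ltnNge szB => /(_ isT).
Qed.

Lemma cofinite_quadratic (R : idomainType) (c0 c1 c2 : R) :
  [|| c0 != 0, c1 != 0 | c2 != 0] ->
  cofinite_set [set t | c0 + c1 * t + c2 * t ^+ 2 != 0].
Proof.
move=> c_neq0; pose p := c0%:P + c1 *: 'X + c2 *: 'X^2.
have p_neq0 : p != 0.
  apply: contraTneq c_neq0 => p0.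
  have coef_p k : p`_k = 0 by rewrite p0 coef0.
  move: (coef_p 0%N) (coef_p 1%N) (coef_p 2%N).
  by rewrite !coefE /= !(mulr0, mulr1, addr0, add0r) => -> -> ->; rewrite eqxx.
apply: (sub_cofinite_set _ (cofinite_nonroot p_neq0)) => t /=.
by rewrite rootE /p !hornerE.
Qed.

Lemma cofinite_transvection_conj_entry (R : idomainType) (n : nat)
    (i j a b : 'I_n) (M : 'M[R]_n) (c : R) :
  [|| M a b != c, (a == i)%:R * M j b - M a i * (b == j)%:R != 0
    | (a == i)%:R * M j i * (b == j)%:R != 0] ->
  cofinite_set [set t | transvection_conj i j t M a b != c].
Proof.
move=> coef_neq0.
have := @cofinite_quadratic _ (M a b - c) ((a == i)%:R * M j b - M a i * (b == j)%:R)
  (- ((a == i)%:R * M j i * (b == j)%:R)).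
rewrite subr_eq0 oppr_eq0 => /(_ coef_neq0); apply: sub_cofinite_set => t /=.
apply: contraNneq; rewrite transvection_conjE => <-; apply/eqP; ring.
Qed.

Section TransvectionSteps.
Variables (R : idomainType) (n : nat).
Implicit Types (M : 'M[R]_n.+1) (P Q : 'M[R]_n.+1 -> Prop).

Definition transvection_step P Q (i j : 'I_n.+1) :=
  i != j /\ forall M, P M -> cofinite_set [set t | Q (transvection_conj i j t M)].

Definition nonscalar_row_from (k : nat) M :=
  exists a b : 'I_n.+1, ((a == ord0) || (k <= a)%N) &&
    (M a b != if a == b then M ord0 ord0 else 0).

Definition first_row_from (k : nat) M := exists2 b : 'I_n.+1, (k <= b)%N & M ord0 b != 0.

Definition corners_neq0 M :=
  [/\ M ord0 ord0 != 0, M ord0 ord_max != 0, M ord_max ord0 != 0 & M ord_max ord_max != 0].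

Lemma nonscalar_row_from1 M : ~~ is_scalar_mx M -> nonscalar_row_from 1 M.
Proof.
move=> M_nonscalar; apply: contrapT => M_rows; case/negP: M_nonscalar.
apply/is_scalar_mxP; exists (M ord0 ord0); apply/matrixP => a b; rewrite mxE mulrb.
apply/eqP; apply: contrapT => Mab; apply: M_rows; exists a, b; apply/andP; split.
  by rewrite lt0n orbN.
exact/negP.
Qed.

Lemma nonscalar_row_from_end M : nonscalar_row_from n.+1 M -> first_row_from 1 M.
Proof.
case=> a [b /andP[/orP[/eqP-> | ]]]; last by rewrite leqNgt ltn_ord.
have [<-|b_neq0] := eqVneq ord0 b; first by rewrite eqxx.
by move=> M0b; exists b; rewrite // lt0n eq_sym.
Qed.

Lemma first_row_from_end M : first_row_from n M -> M ord0 ord_max != 0.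
Proof.
case=> b nb; suff -> : b = ord_max by [].
by apply/val_inj/eqP; rewrite eqn_leq nb -ltnS ltn_ord.
Qed.

Lemma cofinite_nonscalar_row_from k (f : R -> 'M[R]_n.+1) a b :
  (a == ord0) || (k <= a)%N ->
  cofinite_set [set t | f t a b != if a == b then f t ord0 ord0 else 0] ->
  cofinite_set [set t | nonscalar_row_from k (f t)].
Proof. by move=> a_row; apply: sub_cofinite_set => t /= ?; exists a, b; apply/andP. Qed.

Lemma nonscalar_row_step k : (0 < k <= n)%N ->
  transvection_step (nonscalar_row_from k) (nonscalar_row_from k.+1) ord0 (inord k).
Proof.
move=> /andP[k_gt0 k_le_n]; set j : 'I_n.+1 := inord k.
have jk : j = k :> nat by rewrite inordK.
have j0 : ord0 != j by rewrite -val_eqE /= jk eq_sym -lt0n.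
split=> // M [a [b /andP[a_row Mab]]].
(* Conjugation by [1 + t E_0j] adds [t] times row [j] to row [0] and subtracts [t]
   times column [0] from column [j]; all other entries are unchanged. *)
pose witness := @cofinite_nonscalar_row_from k.+1 (transvection_conj ord0 j ^~ M).
have [a0|a_neq0] := eqVneq a ord0.
  subst a; have [b0|b_neq0] := eqVneq ord0 b; first by rewrite -b0 eqxx eqxx in Mab.
  apply: (witness ord0 b); rewrite ?eqxx // (negbTE b_neq0).
  apply: cofinite_transvection_conj_entry.
  by rewrite (negbTE b_neq0) in Mab; rewrite Mab.
have [aj|a_neq_j] := eqVneq a j.
  subst a; have [bj|b_neq_j] := eqVneq b j.
    subst b; rewrite eqxx in Mab.
    apply: (witness ord0 j); rewrite ?eqxx // (negbTE j0).
    apply: cofinite_transvection_conj_entry.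
    by rewrite !eqxx /= mul1r mulr1 subr_eq0 Mab orbT.
  have [b0|b_neq0] := eqVneq b ord0.
    subst b; rewrite (negbTE a_neq0) in Mab.
    apply: (witness ord0 j); rewrite ?eqxx // (negbTE j0).
    apply: cofinite_transvection_conj_entry.
    by rewrite !eqxx /= !mul1r !mulr1 Mab !orbT.
  rewrite [j == b]eq_sym (negbTE b_neq_j) in Mab.
  apply: (witness ord0 b); rewrite ?eqxx // eq_sym (negbTE b_neq0).
  apply: cofinite_transvection_conj_entry.
  by rewrite eqxx (negbTE b_neq_j) /= mul1r mulr0 subr0 Mab orbT.
have k_lt_a : (k < a)%N.
  rewrite ltn_neqAle -jk val_eqE eq_sym a_neq_j /=.
  by move: a_row; rewrite (negbTE a_neq0) jk.
have [ab|a_neq_b] := eqVneq a b.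
  subst b; rewrite eqxx in Mab.
  apply: (witness a a); rewrite ?k_lt_a ?orbT // eqxx.
  have : cofinite_set [set t | transvection_conj ord0 j t M ord0 ord0 != M a a].
    by apply: cofinite_transvection_conj_entry; rewrite eq_sym Mab.
  have M'aa t : transvection_conj ord0 j t M a a = M a a by rewrite transvection_conj_id.
  by move=> /sub_cofinite_set; apply => t /=; rewrite M'aa eq_sym.
apply: (witness a b); rewrite ?k_lt_a ?orbT // (negbTE a_neq_b).
apply: cofinite_transvection_conj_entry.
by rewrite (negbTE a_neq_b) in Mab; rewrite Mab.
Qed.

Lemma first_row_step k : (0 < k < n)%N ->
  transvection_step (first_row_from k) (first_row_from k.+1) (inord k) ord_max.
Proof.
move=> /andP[k_gt0 k_lt_n]; set j : 'I_n.+1 := inord k.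
have jk : j = k :> nat by rewrite inordK // ltnS ltnW.
have j0 : ord0 != j by rewrite -val_eqE /= jk eq_sym -lt0n.
have j_max : j != ord_max by rewrite -val_eqE /= jk neq_ltn k_lt_n.
split=> // M [b kb M0b].
have [bj|b_neq_j] := eqVneq b j.
  have : cofinite_set [set t | transvection_conj j ord_max t M ord0 ord_max != 0].
    apply: cofinite_transvection_conj_entry.
    by rewrite (negbTE j0) eqxx /= mul0r mulr1 sub0r oppr_eq0 -bj M0b orbT.
  by apply: sub_cofinite_set => t /= ?; exists ord_max.
have : cofinite_set [set t | transvection_conj j ord_max t M ord0 b != 0].
  by apply: cofinite_transvection_conj_entry; rewrite M0b.
apply: sub_cofinite_set => t /= ?; exists b => //.
by rewrite ltn_neqAle kb -jk val_eqE eq_sym b_neq_j.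
Qed.

Lemma corners_step : (0 < n)%N ->
  transvection_step (fun M => M ord0 ord_max != 0) corners_neq0 ord_max ord0.
Proof.
move=> n_gt0; have max0 : (ord_max == ord0 :> 'I_n.+1) = false.
  by apply/negbTE; rewrite -val_eqE /= -lt0n.
have zero_max : (ord0 == ord_max :> 'I_n.+1) = false by rewrite eq_sym.
split=> [|M M0max]; first by rewrite max0.
have entry a b : [|| M a b != 0,
      (a == ord_max)%:R * M ord0 b - M a ord_max * (b == ord0)%:R != 0
    | (a == ord_max)%:R * M ord0 ord_max * (b == ord0)%:R != 0] ->
    cofinite_set [set t | transvection_conj ord_max ord0 t M a b != 0].
  exact: cofinite_transvection_conj_entry.
have := entry ord0 ord0; have := entry ord0 ord_max.
have := entry ord_max ord0; have := entry ord_max ord_max.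
rewrite !eqxx max0 zero_max /= !(mul0r, mulr0, mul1r, mulr1, sub0r, subr0, oppr_eq0).
rewrite M0max !orbT => /(_ isT) Cmm /(_ isT) Cm0 /(_ isT) C0m /(_ isT) C00.
have := conj (conj (conj C00 C0m) Cm0) Cmm; rewrite -!cofinite_setI.
by apply: sub_cofinite_set => t [[[? ?] ?] ?]; split.
Qed.

End TransvectionSteps.

Arguments nonscalar_row_from {R n} k M.
Arguments first_row_from {R n} k M.
Arguments corners_neq0 {R n} M.

Section ConjugateFamily.
Variables (R : realType) (n : nat) (A : set 'M[R]_n.+1).
Hypothesis countA : countable A.

Definition conj_reachable (P : 'M[R]_n.+1 -> Prop) :=
  exists2 h : 'M[R]_n.+1, h \in unitmx & forall M, A M -> P (h *m M *m invmx h).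

Lemma conj_reachable_mono (P Q : 'M[R]_n.+1 -> Prop) :
  (forall M, P M -> Q M) -> conj_reachable P -> conj_reachable Q.
Proof. by move=> PQ [h hu Ph]; exists h => // M /Ph /PQ. Qed.

Lemma conj_reachable_transvection P Q i j :
  transvection_step P Q i j -> conj_reachable P -> conj_reachable Q.
Proof.
move=> [ij PQ] [h hu Ph].
have [t /= Qt] := bigcap_cofinite_neq0 countA (fun M AM => PQ _ (Ph M AM)).
have Tu := transvection_unit t ij.
exists (transvection i j t *m h); first by rewrite unitmx_mul Tu.
have invTh : invmx (transvection i j t *m h) = invmx h *m invmx (transvection i j t).
  exact: invrM.
move=> M AM; have /= := Qt M AM.
by rewrite /transvection_conj -invmx_transvection // invTh !mulmxA.
Qed.

Lemma conj_reachable_iter (Inv : nat -> 'M[R]_n.+1 -> Prop) (i j : nat -> 'I_n.+1) lo m :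
  (forall k, (lo <= k < lo + m)%N -> transvection_step (Inv k) (Inv k.+1) (i k) (j k)) ->
  conj_reachable (Inv lo) -> conj_reachable (Inv (lo + m)%N).
Proof.
elim: m => [|m IH] steps reach; first by rewrite addn0.
rewrite addnS; apply: conj_reachable_transvection (steps _ _) (IH _ reach).
  by rewrite leq_addr addnS ltnS /=.
by move=> k /andP[lok km]; apply: steps; rewrite lok addnS ltnS ltnW.
Qed.

End ConjugateFamily.

Theorem conj_corners_neq0 (R : realType) (n : nat) (A : set 'M[R]_n.+1) :
  countable A -> (forall M, A M -> ~~ is_scalar_mx M) -> conj_reachable A corners_neq0.
Proof.
case: n A => [|n] A countA A_nonscalar.
  exists 1%:M => [|M /A_nonscalar]; first exact: unitmx1.
  by rewrite [M]mx11_scalar scalar_mx_is_scalar.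
have start : conj_reachable A (nonscalar_row_from 1).
  exists 1%:M => [|M /A_nonscalar]; first exact: unitmx1.
  by rewrite mul1mx invmx1 mulmx1; exact: nonscalar_row_from1.
have := conj_reachable_iter countA (i := fun=> ord0) (j := inord) (m := n.+1) _ start.
rewrite add1n => /(_ (@nonscalar_row_step _ _)).
move=> /(conj_reachable_mono (@nonscalar_row_from_end _ _)) row1.
have := conj_reachable_iter countA (i := inord) (j := fun=> ord_max) (m := n) _ row1.
rewrite add1n => /(_ (@first_row_step _ _)).
move=> /(conj_reachable_mono (@first_row_from_end _ _)).
apply: (conj_reachable_transvection countA); exact: corners_step.
Qed.

Lemma In_nth_index (T : Type) (x0 x : T) (s : seq T) :
  List.In x s -> exists2 k, (k < size s)%N & nth x0 s k = x.
Proof.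
elim: s => [//|y s IH] /= [->|/IH [k ks <-]]; first by exists 0%N.
by exists k.+1.
Qed.

Lemma size_length (T : Type) (s : seq T) : size s = length s.
Proof. by elim: s => //= x s ->. Qed.

Section WordMetric.
Variables (G : Type) (mul : G -> G -> G) (one : G) (inv : G -> G) (S : list G).
Hypothesis gG : group_axioms mul one inv.

Local Notation gpw := (gpow mul one).

Lemma invgK : involutive inv.
Proof.
move=> x; rewrite -[inv (inv x)](gmul1r gG) -(gmulVl gG x) (gmulA gG).
by rewrite (gmulVl gG) (gmul1l gG).
Qed.

Lemma gpowD g a b : gpw g (a + b) = mul (gpw g a) (gpw g b).
Proof.
elim: a => [|a IH]; first by rewrite add0n /= (gmul1l gG).
by rewrite addSn /= IH (gmulA gG).
Qed.

Lemma gpow_inj g : torsion_free mul one -> g <> one -> injective (gpw g).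
Proof.
move=> tf g1; suff lt_neq p q : (p < q)%N -> gpw g p <> gpw g q.
  move=> p q epq; case: (ltngtP p q) => // pq; first by case: (lt_neq _ _ pq).
  by case: (lt_neq _ _ pq); rewrite epq.
move=> pq epq; apply: (tf g g1 (q - p)%N); first by rewrite subn_gt0.
have /(congr1 (mul (inv (gpw g p)))) : mul (gpw g p) (gpw g (q - p)) = gpw g p.
  by rewrite -gpowD subnKC 1?ltnW.
by rewrite !(gmulA gG) (gmulVl gG) (gmul1l gG).
Qed.

Definition alphabet := S ++ map inv S.

Local Notation index := 'I_(size alphabet).

Definition spell (l : seq index) : G := foldr mul one [seq nth one alphabet i | i : index <- l].

Lemma letter_spell x : letter inv S x -> exists i : index, nth one alphabet i = x.
Proof.
have size_alph : size alphabet = (size S + size S)%N by rewrite size_cat size_map.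
case=> [/(In_nth_index one) [k kS <-] | /(In_nth_index one) [k kS xk]].
  have k_alph : (k < size alphabet)%N by rewrite size_alph ltn_addr.
  by exists (Ordinal k_alph); rewrite /= nth_cat kS.
have k_alph : (size S + k < size alphabet)%N by rewrite size_alph ltn_add2l.
exists (Ordinal k_alph); rewrite /= nth_cat ltnNge leq_addr /= addKn.
by rewrite (nth_map one) // xk invgK.
Qed.

Lemma represents_spell g L : represents mul one inv S g L ->
  exists2 l : seq index, size l = L & spell l = g.
Proof.
case=> w [<- [letters <-]].
suff [l <-] : exists l : seq index, [seq nth one alphabet i | i : index <- l] = w.
  by exists l; rewrite // -size_length size_map.
elim: w letters => [|x w IH] letters; first by exists [::].
have [/letter_spell [i <-] /IH [l <-]] := proj1 (List.Forall_cons_iff _ _ _) letters.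
by exists (i :: l).
Qed.

Lemma countable_generated : generates mul one inv S -> countable [set: G].
Proof.
move=> gen; have spellT : [set: G] `<=` spell @` setT.
  by move=> g _; have [L /represents_spell [l _ <-]] := gen g; exists l.
apply: sub_countable (subset_card_le spellT) _.
exact: card_le_trans (card_image_le _ _) (countableP _).
Qed.

Lemma finite_word_ball N :
  finite_set [set g | exists2 L, is_wordlen mul one inv S g L & (L <= N)%N].
Proof.
have words L : finite_set [set l : seq index | size l = L].
  apply: sub_finite_set (finite_image val (@finite_finset (L.-tuple _) setT)).
  by move=> l /eqP sl; exists (Tuple sl).
apply: sub_finite_set (bigcup_finite (finite_II N.+1) (fun L _ => finite_image spell (words L))).
by move=> g [L [/represents_spell [l sl <-] _] LN]; exists L => //; exists l.
Qed.

Lemma exists_wordlen : generates mul one inv S ->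
  forall g, exists L, is_wordlen mul one inv S g L.
Proof.
move=> gen g; have reps : exists L, `[< represents mul one inv S g L >].
  by have [L] := gen g; exists L; apply/asboolP.
case: (ex_minnP reps) => L /asboolP repL minL; exists L; split=> // m /asboolP.
exact: minL.
Qed.

End WordMetric.

Lemma singular_value_ratio_scalar (R : realType) (d : nat) (c : R) (s : seq R) :
  singular_values_sq (c%:M : 'M[R]_d) s -> Num.sqrt s`_0 / Num.sqrt s`_1 <= 1.
Proof.
case=> size_s _ char_s.
have char_c2 : char_poly ((c * c)%:M : 'M[R]_d) = ('X - (c * c)%:P) ^+ d.
  rewrite /char_poly /char_poly_mx map_scalar_mx /=.
  suff -> : 'X%:M - ((c * c)%:P)%:M = ('X - (c * c)%:P)%:M :> 'M[{poly R}]_d.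
    exact: det_scalar.
  by apply/matrixP => i j; rewrite !mxE mulrnBl.
have s_c2 y : y \in s -> y = c * c.
  move=> ys; have := root_prod_XsubC s y; rewrite ys -char_s tr_scalar_mx -scalar_mxM.
  rewrite char_c2 => /rootP; rewrite horner_exp hornerXsubC.
  by move=> /eqP; rewrite expf_eq0 subr_eq0 => /andP[_ /eqP].
have [two_s|small_s] := ltnP 1 (size s); last first.
  by rewrite (nth_default _ small_s) sqrtr0 invr0 mulr0 ler01.
have s0 : s`_0 = c * c by apply: s_c2; rewrite mem_nth // ltnW.
have s1 : s`_1 = c * c by apply: s_c2; rewrite mem_nth.
rewrite s0 s1.
by have [->|sqrt_neq0] := eqVneq (Num.sqrt (c * c)) 0; rewrite ?mul0r ?divff.
Qed.

Lemma anosov_scalar_wordlen_bound (G : Type) (mul : G -> G -> G) (one : G) (inv : G -> G)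
    (S : list G) (R : realType) (n : nat) (rho : G -> 'M[R]_n) :
  projective_anosov mul one inv S rho ->
  exists N, forall g L, is_wordlen mul one inv S g L -> is_scalar_mx (rho g) -> (L <= N)%N.
Proof.
move=> [C [a [C_gt0 [a_gt0 anosov]]]]; exists (Num.trunc (C * a)^-1) => g L wl.
move=> /is_scalar_mxP [c rho_g]; have [s [sv_s ratio]] := anosov _ _ wl.
rewrite rho_g in sv_s; have ratio_le1 := le_trans ratio (singular_value_ratio_scalar sv_s).
have bound : C * (1 + a * L%:R) <= 1.
  exact: le_trans (ler_wpM2l (ltW C_gt0) (expR_ge1Dx _)) ratio_le1.
have L_ge0 : 0 <= L%:R :> R by [].
rewrite -ltnS -(ltr_nat R); apply: le_lt_trans (truncnS_gt _).
by rewrite -[(C * a)^-1]mul1r ler_pdivlMr ?mulr_gt0 //; nra.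
Qed.

Lemma anosov_nonscalar (G : Type) (mul : G -> G -> G) (one : G) (inv : G -> G)
    (S : list G) (R : realType) (n : nat) (rho : G -> 'M[R]_n) :
  group_axioms mul one inv -> generates mul one inv S -> torsion_free mul one ->
  representation mul one rho -> projective_anosov mul one inv S rho ->
  forall g, g <> one -> ~~ is_scalar_mx (rho g).
Proof.
move=> gG gen tf [_ [rho1 rhoM]] anosov g g1; apply/negP => /is_scalar_mxP [c rho_g].
have [N bound] := anosov_scalar_wordlen_bound anosov.
have scalar_pow k : is_scalar_mx (rho (gpow mul one g k)).
  elim: k => [|k /is_scalar_mxP [c' IH]] /=; first by rewrite rho1 scalar_mx_is_scalar.
  by rewrite rhoM rho_g IH -scalar_mxM scalar_mx_is_scalar.
apply: infinite_nat.
suff -> : [set: nat] = gpow mul one g @^-1`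
    [set x | exists2 L, is_wordlen mul one inv S x L & (L <= N)%N].
  by apply: (finite_preimage _ (finite_word_ball S gG N)) => p q _ _; apply: (gpow_inj gG tf g1).
apply/seteqP; split=> // k _ /=.
have [L wl] := exists_wordlen gen (gpow mul one g k).
by exists L => //; exact: bound wl (scalar_pow k).
Qed.

Theorem proposition3p1 (G : Type) (mul : G -> G -> G) (one : G) (inv : G -> G)
  (S : list G) (R : realType) (n : nat) (rho : G -> 'M[R]_n.+1) (w : G) :
  group_axioms mul one inv ->
  generates mul one inv S ->
  word_hyperbolic mul one inv S ->
  torsion_free mul one ->
  maximal_cyclic mul one inv w ->
  representation mul one rho ->
  projective_anosov mul one inv S rho ->
  exists h : 'M[R]_n.+1, h \in unitmx /\
    forall g, ~ in_cyclic mul one inv w g ->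
      let M := h *m rho g *m invmx h in
      [/\ M ord0 ord0 != 0, M ord0 ord_max != 0,
          M ord_max ord0 != 0 & M ord_max ord_max != 0].
Proof.
move=> gG gen _ tf _ rep anosov.
pose A := rho @` [set g | ~ in_cyclic mul one inv w g].
have countA : countable A.
  apply: card_le_trans (card_image_le _ _) _.
  exact: sub_countable (subset_card_le (@subsetT _ _)) (countable_generated gG gen).
have [h hu conj_h] : conj_reachable A corners_neq0.
  apply: conj_corners_neq0 countA _ => _ [g w_g <-].
  apply: (anosov_nonscalar gG gen tf rep anosov) => g1.
  by apply: w_g; exists 0; rewrite g1.
by exists h; split=> // g w_g; apply: conj_h; exists g.
Qed.
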